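(* Let $M>0$ be fixed and, for integers $N\ge1$, let \[ p_N(\lambda)=-\lambda(-M-\lambda)^N+M\,N!\sum_{n=0}^{N-1}\frac{(-M-\lambda)^n}{n!}+(-1)^N M\,N!\,. \] Then there exists $N_0$ such that for all $N\ge N_0$ the polynomial $p_N$ has at least one positive real root.
   Context: $p_N$ is the characteristic polynomial of the coefficient matrix of the linear ODE system satisfied by the $N$-th order $(x,v)$-moments of solutions of Model A, $\partial_tf+v\partial_xf=S[\rho_f](x+v)\rho_f(x)-Mf$, with $M$ the total mass. *)

From mathcomp Require Import all_boot all_order all_algebra.
From mathcomp Require Import reals.
Set Implicit Arguments. Unset Strict Implicit. Unset Printing Implicit Defensive.
Import Order.TTheory GRing.Theory Num.Theory.
Local Open Scope ring_scope.

Definition pN (R : realType) (M : R) (N : nat) : {poly R} :=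
  - 'X * (- M%:P - 'X) ^+ N
  + (M * (N`!)%:R) *: (\sum_(n < N) ((n`!)%:R)^-1 *: (- M%:P - 'X) ^+ n)
  + ((-1) ^+ N * M * (N`!)%:R)%:P.

From mathcomp Require Import all_boot all_order all_algebra.
From mathcomp Require Import reals.
From mathcomp Require Import all_classical topology normedtype sequences exp.
From mathcomp Require Import polyrcf ring lra.
Set Implicit Arguments. Unset Strict Implicit. Unset Printing Implicit Defensive.
Import Order.TTheory GRing.Theory Num.Theory.
Import numFieldNormedType.Exports.
Local Open Scope ring_scope.

(* Up to the sign (-1)^(N+1), p_N is monic of degree N+1, so it is positive
   for large lambda.  Its value at 0 is (-1)^(N+1) M N! (S_N + (-1)^N), where
   S_N is the N-th partial sum of the series of exp(-M).  Since S_N tends to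
   exp(-M) < 1, eventually |S_N| < 1, the signed polynomial is negative at 0,
   and the intermediate value theorem yields a positive root. *)

Local Open Scope classical_set_scope.

Lemma near_norm_series_exp_coeff_lt1 (R : realType) (x : R) : x < 0 ->
  \forall n \near \oo, `|series (exp_coeff x) n| < 1.
Proof.
move=> x_lt0; have ex_lt1 : expR x < 1 by rewrite expR_lt1.
have series_cvg : series (exp_coeff x) @ \oo --> expR x.
  exact: is_cvg_series_exp_coeff.
have := cvgr_dist_lt _ _ series_cvg (1 - expR x).
rewrite subr_gt0 => /(_ _ ex_lt1); apply: filterS => n.
have := expR_gt0 x; rewrite ltr_distlC ltr_norml => ? /andP[? ?].
apply/andP; split; lra.
Qed.

Local Close Scope classical_set_scope.

Lemma size_sum_scale_exp_leq (R : nzRingType) (u : {poly R}) (a : nat -> R) k :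
  (size u <= 2)%N -> (size (\sum_(n < k) a n *: u ^+ n)%R <= k)%N.
Proof.
move=> size_u; elim: k => [|k IHk]; first by rewrite big_ord0 size_poly0.
rewrite big_ord_recr /=; apply: leq_trans (size_polyD _ _) _.
rewrite geq_max (leq_trans IHk) //=.
apply: leq_trans (size_scale_leq _ _) _.
apply: leq_trans (size_poly_exp_leq _ _) _.
have le1 : ((size u).-1 <= 1)%N by rewrite -subn1 leq_subLR.
by rewrite ltnS -[leqRHS]mul1n leq_mul.
Qed.

Lemma monic_root_gt0 (R : rcfType) (p : {poly R}) :
  p \is monic -> p.[0] < 0 -> exists x, 0 < x /\ root p x.
Proof.
move=> /monicP lc_p p0_lt0.
have [b p_ge1] : exists b, forall x, b <= x -> lead_coef p <= p.[x].
  by apply: poly_pinfty_gt_lc; rewrite lc_p ltr01.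
pose c := Num.max b 1.
have pc_ge0 : 0 <= p.[c] by rewrite (le_trans _ (p_ge1 c _)) ?lc_p ?ler01 ?le_max ?lexx.
have c_ge0 : 0 <= c by rewrite le_max ler01 orbT.
have [x /andP[x_ge0 _] root_x] := poly_ivt c_ge0 (introT andP (conj (ltW p0_lt0) pc_ge0)).
exists x; split => //; rewrite lt_neqAle x_ge0 andbT.
by apply: contraTneq root_x => <-; rewrite /root lt_eqF.
Qed.

Section SignedPN.
Variables (R : realType) (M : R) (N : nat).

Let u : {poly R} := - M%:P - 'X.
Let tail : {poly R} := (M * (N`!)%:R) *: (\sum_(n < N) ((n`!)%:R)^-1 *: u ^+ n)
  + ((-1) ^+ N * M * (N`!)%:R)%:P.

Lemma signed_pNE :
  (-1) ^+ N.+1 *: pN M N = 'X * ('X + M%:P) ^+ N + (-1) ^+ N.+1 *: tail.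
Proof.
rewrite /pN -/u -addrA -/tail scalerDr; congr (_ + _).
have -> : u = - ('X + M%:P) by rewrite /u opprD addrC.
rewrite [(- (_ + _)) ^+ N]exprNn -mul_polyC rmorphXn rmorphN1.
have sign_sq : ((-1) ^+ N * (-1) ^+ N : {poly R}) = 1.
  by rewrite -exprMn mulrNN mulr1 expr1n.
transitivity ('X * ('X + M%:P) ^+ N * ((-1) ^+ N * (-1) ^+ N)).
  by rewrite exprS; ring.
by rewrite sign_sq mulr1.
Qed.

Lemma signed_pN_monic : (-1) ^+ N.+1 *: pN M N \is monic.
Proof.
have size_u : (size u <= 2)%N by rewrite /u -opprD size_polyN addrC size_XaddC.
have size_lead : size ('X * ('X + M%:P) ^+ N) = N.+2.
  rewrite -[M]opprK polyCN mulrC size_mulX ?expf_neq0 ?polyXsubC_eq0 //.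
  by rewrite (size_exp_XsubC N (- M)).
rewrite monicE signed_pNE lead_coefDl.
  by rewrite -monicE monicMl ?monicX ?monic_exp ?monicXaddC.
rewrite size_lead ltnS; apply: leq_trans (size_scale_leq _ _) _.
rewrite /tail; apply: (leq_trans (size_polyD _ _)).
rewrite geq_max (leq_trans (size_polyC_leq1 _)) // andbT.
apply: (leq_trans (size_scale_leq _ _)).
apply/ltnW; rewrite ltnS.
exact: size_sum_scale_exp_leq (fun n => (n`!%:R)^-1) N size_u.
Qed.

Lemma pN_horner0 :
  (pN M N).[0] = M * (N`!)%:R * (series (exp_coeff (- M)) N + (-1) ^+ N).
Proof.
rewrite /pN !hornerE horner_sum oppr0 mul0r add0r mulrDr; congr (_ * _ + _).
  rewrite /series /= big_mkord; apply: eq_bigr => n _.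
  by rewrite !hornerE subr0 /exp_coeff mulrC.
by rewrite [RHS]mulrC mulrA.
Qed.

End SignedPN.

Theorem lemma3 (R : realType) (M : R) (hM : 0 < M) :
  exists N0 : nat, forall N : nat, (1 <= N)%N -> (N0 <= N)%N ->
    exists lambda : R, 0 < lambda /\ root (pN M N) lambda.
Proof.
have neg_M : - M < 0 by rewrite oppr_lt0.
have [N0 _ small_sums] := near_norm_series_exp_coeff_lt1 neg_M.
exists N0 => N _ /small_sums /= small_sum.
set s : R := (-1) ^+ N.+1.
have s_neq0 : s != 0 by rewrite /s expf_eq0 oppr_eq0 oner_eq0 andbF.
have sign_N : s * (-1) ^+ N = -1 by rewrite /s exprS mulN1r mulNr -exprMn mulrNN mulr1 expr1n.
have sum_lt1 : s * series (exp_coeff (- M)) N < 1.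
  by rewrite (le_lt_trans (ler_norm _)) // normrM normrX normrN normr1 expr1n mul1r.
have factor_gt0 : 0 < M * (N`!)%:R by rewrite mulr_gt0 // ltr0n fact_gt0.
have [x [x_gt0 root_x]] : exists x, 0 < x /\ root (s *: pN M N) x.
  apply: monic_root_gt0; first exact: signed_pN_monic.
  rewrite hornerZ pN_horner0 mulrCA mulrDr sign_N.
  by rewrite pmulr_rlt0 // subr_lt0.
by exists x; move: root_x; rewrite rootZ.
Qed.
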